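(* Let $p$ be an odd prime and let $n,s$ be positive integers such that $2n/s\geq 3$ is an odd integer; put $q=p^n$, $d=p^s$. For any $k=\alpha^d+\alpha\in\mathbb{F}_{q^2}$ (with $\alpha\in\mathbb{F}_{q^2}$), the map \[ \phi_k\big((a^d+a,x)\big)=\big(a^d+a+k,\ x+a^d\alpha+a\alpha^d+\alpha^{d+1}\big) \] is an automorphism of the graph $\mathcal{A}_{q^2,d}$.
   Context: The map $x\mapsto x^d+x$ is a bijection of $\mathbb{F}_{q^2}$. The graph $\mathcal{A}_{q^2,d}$ has vertex set $\mathbb{F}_{q^2}\times\mathbb{F}_{q^2}$; writing vertices as $(a^d+a,x)$ and $(b^d+b,y)$ with $a,b,x,y\in\mathbb{F}_{q^2}$ (uniquely), two distinct vertices are adjacent iff $a^db+ab^d=x+y$. *)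

From HB Require Import structures.
From mathcomp Require Import all_boot all_order all_algebra all_field.
Set Implicit Arguments. Unset Strict Implicit. Unset Printing Implicit Defensive.
Import GRing.Theory.
Local Open Scope ring_scope.

Definition adjA (F : fieldType) (d : nat) (v w : F * F) : Prop :=
  v <> w /\
  exists a b : F, v.1 = a ^+ d + a /\ w.1 = b ^+ d + b /\
                  a ^+ d * b + a * b ^+ d = v.2 + w.2.

Definition is_autA (F : fieldType) (d : nat) (f : F * F -> F * F) : Prop :=
  bijective f /\ forall v w, adjA d (f v) (f w) <-> adjA d v w.

From HB Require Import structures.
From mathcomp Require Import all_boot all_order all_algebra all_field.
From mathcomp Require Import ring.
Import GRing.Theory.
Local Open Scope ring_scope.

(** In characteristic p, with d a power of p, the map a |-> a^d + a is additive,
    and for a field of odd characteristic whose elements satisfy x^(d^m) = x with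
    m odd it is injective: a^d = -a forces a = a^(d^m) = (-1)^m a = -a.  Writing
    B(a, b) = a^d b + a b^d for the adjacency form, additivity gives
    B(a + α, b + α) = B(a, b) + (B(a, α) + α^(d+1)) + (B(b, α) + α^(d+1)),
    so translating the first coordinate by α^d + α and the second one by
    B(a, α) + α^(d+1) preserves adjacency. *)

Section AddFrobenius.

Context {R : fieldType} (d : nat).
Hypothesis dP : [pchar R].-nat d.

Definition addFrob (a : R) := a ^+ d + a.

Definition bform (a b : R) := a ^+ d * b + a * b ^+ d.

Lemma addFrobD a b : addFrob (a + b) = addFrob a + addFrob b.
Proof. by rewrite /addFrob exprDn_pchar //; ring. Qed.

Lemma bform_shift a b c :
  bform (a + c) (b + c) =
  bform a b + (bform a c + c ^+ d.+1) + (bform b c + c ^+ d.+1).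
Proof. by rewrite /bform !exprDn_pchar // exprSr; ring. Qed.

Lemma expr_expn_oppr (c : R) j :
  c ^+ d = - c -> c ^+ (d ^ j) = (-1) ^+ j * c.
Proof.
move=> cd; elim: j => [|j IHj]; first by rewrite mul1r.
by rewrite expnS exprM cd exprNn_pchar ?pnatX ?dP // IHj exprS mulN1r mulNr.
Qed.

Lemma addFrob_eq0 {m} {c : R} :
  2%:R != 0 :> R -> odd m -> c ^+ (d ^ m) = c -> addFrob c = 0 -> c = 0.
Proof.
move=> two_neq0 odd_m cdm /eqP; rewrite addr_eq0 => /eqP cd.
move: cdm; rewrite expr_expn_oppr // -signr_odd odd_m mulN1r => /eqP.
rewrite eq_sym -subr_eq0 opprK -mulr2n -mulr_natr mulf_eq0 (negbTE two_neq0).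
by rewrite orbF => /eqP.
Qed.

Lemma addFrob_inj {m} :
  2%:R != 0 :> R -> odd m -> (forall x : R, x ^+ (d ^ m) = x) ->
  injective addFrob.
Proof.
move=> two_neq0 odd_m Fdm x y eq_xy; apply/eqP; rewrite -subr_eq0; apply/eqP.
apply: (addFrob_eq0 two_neq0 odd_m (Fdm _)).
by apply: (addIr (addFrob y)); rewrite -addFrobD subrK eq_xy add0r.
Qed.

End AddFrobenius.

Section Translation.

Context {F : finFieldType} (d : nat) (alpha : F).
Hypothesis dP : [pchar F].-nat d.
Hypothesis addFrob_injF : injective (addFrob d : F -> F).

Local Notation coord := (invF addFrob_injF).

Lemma adjA_coord v w :
  adjA d v w <-> v <> w /\ bform d (coord v.1) (coord w.1) = v.2 + w.2.
Proof.
split=> [[neq_vw [a [b [-> [-> eq_ab]]]]] | [neq_vw eq_vw]].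
  by split=> //; rewrite !(invF_f addFrob_injF).
split=> //; exists (coord v.1), (coord w.1).
by rewrite -!/(addFrob d (coord _)) !(f_invF addFrob_injF).
Qed.

Lemma coord_shift u : coord (u + addFrob d alpha) = coord u + alpha.
Proof. by apply: addFrob_injF; rewrite addFrobD // !(f_invF addFrob_injF). Qed.

Definition shiftA (v : F * F) :=
  (v.1 + addFrob d alpha, v.2 + (bform d (coord v.1) alpha + alpha ^+ d.+1)).

Lemma shiftA_addFrob a x :
  shiftA (addFrob d a, x) =
  (addFrob d a + addFrob d alpha, x + (bform d a alpha + alpha ^+ d.+1)).
Proof. by rewrite /shiftA /= (invF_f addFrob_injF). Qed.

Lemma shiftA_inj : injective shiftA.
Proof.
by move=> [u x] [u' y] [/addIr eq_u]; rewrite /= {}eq_u => /addIr ->.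
Qed.

Lemma shiftA_aut : is_autA d shiftA.
Proof.
split; first exact: injF_bij shiftA_inj.
move=> v w; rewrite !adjA_coord /= !coord_shift bform_shift //.
rewrite -(addrA (bform _ _ _)) (addrACA v.2).
split=> -[neq_vw eq_vw]; split.
- by move/(congr1 shiftA).
- exact: addIr eq_vw.
- by move/shiftA_inj.
- by rewrite eq_vw.
Qed.

End Translation.

Theorem lemma8 (p n s : nat) (F : finFieldType) (alpha : F) :
  prime p -> odd p -> (0 < n)%N -> (0 < s)%N ->
  (s %| 2 * n)%N -> odd (2 * n %/ s) -> (3 <= 2 * n %/ s)%N ->
  #|F| = (p ^ (2 * n))%N ->
  let d := (p ^ s)%N in
  let k := alpha ^+ d + alpha in
  exists phi : F * F -> F * F,
    (forall a x : F,
        phi (a ^+ d + a, x) =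
        (a ^+ d + a + k, x + a ^+ d * alpha + a * alpha ^+ d + alpha ^+ d.+1))
    /\ is_autA d phi.
Proof.
move=> pr_p odd_p _ _ s_dvd odd_m _ cardF d k.
have chF : p \in [pchar F] by exact: card_finPcharP cardF pr_p.
have dP : [pchar F].-nat d by rewrite /d pnatX pnatE // chF.
have two_neq0 : 2%:R != 0 :> F.
  rewrite -(dvdn_pcharf chF) dvdn_prime2 //.
  by apply: contraTN odd_p => /eqP ->.
have Fdm (x : F) : x ^+ (d ^ (2 * n %/ s)) = x.
  by rewrite /d -expnM mulnC divnK // -cardF expf_card.
have injT := addFrob_inj d dP two_neq0 odd_m Fdm.
exists (shiftA d alpha injT); split; last exact: shiftA_aut.
by move=> a x; rewrite (shiftA_addFrob d alpha injT a) !addrA.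
Qed.
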